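(* Let $(\Omega,d)$ be a metric space, $E$ a non-trivial locally convex Hausdorff space over $\mathbb{K}$ and $\mathcal{FV}(\Omega)$ a dom-space such that $\mathcal{FV}(\Omega)\subset\mathcal{C}_u(\Omega)$ as a linear subspace. If the map $\delta\colon\Omega\to\mathcal{FV}(\Omega)'_\kappa$, $x\mapsto\delta_x$, is uniformly continuous, then $S(u)\in\mathcal{C}_u(\Omega,E)$ for all $u\in\mathcal{FV}(\Omega)\varepsilon E$.
   Context: $\mathbb{K}\in\{\mathbb{R},\mathbb{C}\}$. $\mathcal{C}_u(\Omega,E)$ denotes the uniformly continuous maps from $(\Omega,d)$ to $E$ (with its canonical uniform structure), $\mathcal{C}_u(\Omega):=\mathcal{C}_u(\Omega,\mathbb{K})$. Framework: $J,M$ non-empty index sets, $(\omega_m)_{m\in M}$ non-empty sets, $\nu_{j,m}\colon\omega_m\to[0,\infty)$ such that for all $m$, $x\in\omega_m$ some $\nu_{j,m}(x)>0$; $\operatorname{AP}(\Omega)\subset\mathbb{K}^\Omega$ a linear subspace; $T_m\colon\operatorname{dom}T_m\to\mathbb{K}^{\omega_m}$ linear maps on linear subspaces of $\mathbb{K}^\Omega$; $\mathcal{FV}(\Omega):=\{f\in\operatorname{AP}(\Omega)\cap\bigcap_m\operatorname{dom}T_m: |f|_{j,m}:=\sup_{x\in\omega_m}|T_m(f)(x)|\nu_{j,m}(x)<\infty\ \forall j,m\}$ with these seminorms. It is a dom-space if it is Hausdorff, the seminorms are directed and every $\delta_x\colon f\mapsto f(x)$ belongs to $\mathcal{FV}(\Omega)'$.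 $\mathcal{FV}(\Omega)'_\kappa$: dual with the topology of uniform convergence on absolutely convex compact subsets of $\mathcal{FV}(\Omega)$. $\mathcal{FV}(\Omega)\varepsilon E$: continuous linear maps $\mathcal{FV}(\Omega)'_\kappa\to E$ with the topology of uniform convergence on equicontinuous sets; $S(u)(x):=u(\delta_x)$. *)

From HB Require Import structures.
From mathcomp Require Import all_boot all_order all_algebra.
From mathcomp Require Import all_classical all_reals all_analysis.
From mathcomp Require Import complex.
Set Implicit Arguments.
Unset Strict Implicit.
Unset Printing Implicit Defensive.
Import Order.TTheory GRing.Theory Num.Theory.
Local Open Scope classical_set_scope.
Local Open Scope ring_scope.

Definition Kof (R : realType) (b : bool) : numFieldType :=
  if b then (R : numFieldType) else ((R[i])%C : numFieldType).

Definition is_metric (R : realType) (Omega : Type) (d : Omega -> Omega -> R) :=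
  [/\ forall x y, 0 <= d x y,
      forall x y, d x y = 0 <-> x = y,
      forall x y, d x y = d y x &
      forall x y z, d x z <= d x y + d y z].

Definition lin_subspace (K : numFieldType) (X : Type) (S : set (X -> K)) :=
  S (fun _ => 0) /\
  forall (f g : X -> K) (a : K), S f -> S g -> S (fun t => a * f t + g t).

Definition linear_on (K : numFieldType) (X W : Type) (S : set (X -> K))
    (T : (X -> K) -> (W -> K)) :=
  forall (f g : X -> K) (a : K), S f -> S g ->
    T (fun t => a * f t + g t) = (fun w => a * T f w + T g w).

Section FVspace.
Context (K : numFieldType) (Omega J M : Type) (omega : M -> Type)
  (nu : forall m : M, J -> omega m -> K)
  (AP : set (Omega -> K)) (domT : M -> set (Omega -> K))
  (T : forall m : M, (Omega -> K) -> (omega m -> K)).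

(** |f|_{j,m} <= c, i.e. sup_{x in omega_m} |T_m(f)(x)| nu_{j,m}(x) <= c *)
Definition semi_le (f : Omega -> K) (j : J) (m : M) (c : K) :=
  forall x : omega m, `|@T m f x| * @nu m j x <= c.

Definition FV : set (Omega -> K) := fun f =>
  AP f /\ (forall m, domT m f) /\ (forall j m, exists C : K, semi_le f j m C).

Definition FVnbhs0 (N : set (Omega -> K)) :=
  exists (n : nat) (js : 'I_n -> J) (ms : 'I_n -> M) (e : K), 0 < e /\
    forall f, FV f -> (forall i, semi_le f (js i) (ms i) e) -> N f.

Definition FVopen (O : set (Omega -> K)) :=
  O `<=` FV /\ forall f, O f -> FVnbhs0 (fun h => O (fun t => f t + h t)).

Definition FVcompact (B : set (Omega -> K)) :=
  B `<=` FV /\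
  forall (I : Type) (O : I -> set (Omega -> K)),
    (forall i, FVopen (O i)) -> B `<=` \bigcup_i O i ->
    exists (n : nat) (idx : 'I_n -> I), B `<=` \bigcup_(k in [set: 'I_n]) O (idx k).

Definition abs_convex (B : set (Omega -> K)) :=
  forall f g (a c : K), B f -> B g -> `|a| + `|c| <= 1 ->
    B (fun t => a * f t + c * g t).

(** the dual FV(Omega)': continuous linear functionals on FV(Omega);
    represented as functions on K^Omega vanishing outside FV(Omega). *)
Definition FVdual (y : (Omega -> K) -> K) :=
  [/\ forall f, ~ FV f -> y f = 0,
      (forall f g (a : K), FV f -> FV g ->
          y (fun t => a * f t + g t) = a * y f + y g) &
      forall e : K, 0 < e -> FVnbhs0 (fun f => `|y f| <= e)].

Definition delta (x : Omega) : (Omega -> K) -> K :=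
  fun f => if `[< FV f >] then f x else 0.

Definition kappa_nbhs0 (N : set ((Omega -> K) -> K)) :=
  exists (n : nat) (Bs : 'I_n -> set (Omega -> K)) (e : K),
    [/\ 0 < e, (forall i, FVcompact (Bs i) /\ abs_convex (Bs i)) &
      forall y, FVdual y -> (forall i f, Bs i f -> `|y f| <= e) -> N y].

Definition dom_space :=
  [/\ (forall f, FV f -> (forall j m, semi_le f j m 0) -> f = (fun _ => 0)),
      (forall j1 m1 j2 m2, exists (j : J) (m : M) (C : K), 0 <= C /\
         forall f c, FV f -> semi_le f j m c ->
           semi_le f j1 m1 (C * c) /\ semi_le f j2 m2 (C * c)) &
      forall x, FVdual (delta x)].

Definition eps_prod (E : tvsType K) (u : ((Omega -> K) -> K) -> E) :=
  (forall y1 y2 (a : K), FVdual y1 -> FVdual y2 ->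
     u (fun f => a * y1 f + y2 f) = a *: u y1 + u y2) /\
  forall y0, FVdual y0 -> forall V : set E, nbhs (u y0) V ->
    exists N, kappa_nbhs0 N /\
      forall y, FVdual y -> N (fun f => y f - y0 f) -> V (u y).

End FVspace.

Definition Cu (R : realType) (K : numFieldType) (Omega : Type)
    (d : Omega -> Omega -> R) (f : Omega -> K) :=
  forall e : K, 0 < e -> exists2 eta : R, 0 < eta &
    forall x z, d x z < eta -> `|f x - f z| < e.

Definition CuE (R : realType) (K : numFieldType) (E : tvsType K) (Omega : Type)
    (d : Omega -> Omega -> R) (g : Omega -> E) :=
  forall V : set E, nbhs (0 : E) V -> exists2 eta : R, 0 < eta &
    forall x z, d x z < eta -> V (g x - g z).

Definition ucont_kappa (R : realType) (K : numFieldType) (Omega J M : Type)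
    (omega : M -> Type) (nu : forall m : M, J -> omega m -> K)
    (AP : set (Omega -> K)) (domT : M -> set (Omega -> K))
    (T : forall m : M, (Omega -> K) -> (omega m -> K))
    (d : Omega -> Omega -> R) (D : Omega -> (Omega -> K) -> K) :=
  forall N, kappa_nbhs0 nu AP domT T N -> exists2 eta : R, 0 < eta &
    forall x z, d x z < eta -> N (fun f => D x f - D z f).

From HB Require Import structures.
From mathcomp Require Import all_boot all_order all_algebra.
From mathcomp Require Import all_classical all_reals all_analysis.
From mathcomp Require Import complex.
From mathcomp Require Import ring.
Set Implicit Arguments.
Unset Strict Implicit.
Unset Printing Implicit Defensive.
Import Order.TTheory GRing.Theory Num.Theory.
Local Open Scope classical_set_scope.
Local Open Scope ring_scope.

(* By linearity, S(u)(x) - S(u)(z) = u(delta_x - delta_z).  Continuity of u at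
   0 gives a 0-neighbourhood N of FV(Omega)'_kappa mapped by u into a given
   0-neighbourhood V of E, and uniform continuity of delta puts
   delta_x - delta_z in N as soon as d(x, z) is small. *)

Section DualFV.
Context (K : numFieldType) (Omega J M : Type) (omega : M -> Type)
  (nu : forall m : M, J -> omega m -> K)
  (AP : set (Omega -> K)) (domT : M -> set (Omega -> K))
  (T : forall m : M, (Omega -> K) -> (omega m -> K)).

Lemma semi_le_trans f j m (c c' : K) :
  semi_le nu T f j m c -> c <= c' -> semi_le nu T f j m c'.
Proof. by move=> fc cc' x; apply: le_trans (fc x) cc'. Qed.

Lemma FVnbhs0I (P Q : set (Omega -> K)) :
  FVnbhs0 nu AP domT T P -> FVnbhs0 nu AP domT T Q ->
  FVnbhs0 nu AP domT T (P `&` Q).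
Proof.
move=> [n1 [js1 [ms1 [e1 [e1_gt0 P_e1]]]]] [n2 [js2 [ms2 [e2 [e2_gt0 Q_e2]]]]].
have [e [e_gt0 [e_le1 e_le2]]] : exists e : K, 0 < e /\ e <= e1 /\ e <= e2.
  by case/orP: (real_leVge (gtr0_real e1_gt0) (gtr0_real e2_gt0));
    [exists e1 | exists e2].
pose js k := match fintype.split k with inl i => js1 i | inr i => js2 i end.
pose ms k := match fintype.split k with inl i => ms1 i | inr i => ms2 i end.
exists (n1 + n2)%N, js, ms, e; split => // f FVf f_le; split.
- apply: P_e1 => // i; move: (f_le (unsplit (inl i))).
  by rewrite /js /ms unsplitK => /semi_le_trans; apply.
- apply: Q_e2 => // i; move: (f_le (unsplit (inr i))).
  by rewrite /js /ms unsplitK => /semi_le_trans; apply.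
Qed.

Lemma FVdual0 : FVdual nu AP domT T (fun _ => 0).
Proof.
split => // [f g a _ _|e e_gt0]; first by rewrite mulr0 addr0.
have ord0_elim X : 'I_0 -> X by case.
exists 0%N, (ord0_elim J), (ord0_elim M), e.
by split => // f _ _; rewrite normr0 ltW.
Qed.

Lemma FVdualB (y1 y2 : (Omega -> K) -> K) :
  FVdual nu AP domT T y1 -> FVdual nu AP domT T y2 ->
  FVdual nu AP domT T (fun f => y1 f - y2 f).
Proof.
move=> [y1_out y1_lin y1_cont] [y2_out y2_lin y2_cont]; split.
- by move=> f FVf; rewrite y1_out // y2_out // subr0.
- by move=> f g a FVf FVg; rewrite y1_lin // y2_lin //; ring.
- move=> e e_gt0; have e2_gt0 : 0 < e / 2 by rewrite divr_gt0.
  have [n [js [ms [e' [e'_gt0 small]]]]] :=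
    FVnbhs0I (y1_cont _ e2_gt0) (y2_cont _ e2_gt0).
  exists n, js, ms, e'; split => // f FVf f_le.
  have [y1f_le y2f_le] := small f FVf f_le.
  apply: le_trans (ler_normB _ _) _.
  by rewrite (splitr e); apply: lerD.
Qed.

Section EpsProd.
Variables (E : tvsType K) (u : ((Omega -> K) -> K) -> E).
Hypothesis u_eps : eps_prod nu AP domT T u.

Lemma eps_prodB y1 y2 :
  FVdual nu AP domT T y1 -> FVdual nu AP domT T y2 ->
  u (fun f => y1 f - y2 f) = u y1 - u y2.
Proof.
move=> Dy1 Dy2; have := u_eps.1 _ _ (-1) Dy2 Dy1.
rewrite scaleN1r addrC => <-; congr u; apply: funext => f.
by rewrite mulN1r addrC.
Qed.

Lemma eps_prod0 : u (fun _ => 0) = 0.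
Proof.
have D0 := @FVdual0.
rewrite -(subrr (u (fun _ => 0))) -eps_prodB //.
have -> // : (fun _ : Omega -> K => 0 - 0 : K) = fun _ => 0.
by apply: funext => f; rewrite subrr.
Qed.

Lemma eps_prod_cont0 (V : set E) : nbhs 0 V ->
  exists N, kappa_nbhs0 nu AP domT T N /\
    forall y, FVdual nu AP domT T y -> N y -> V (u y).
Proof.
rewrite -eps_prod0 => /(u_eps.2 _ FVdual0) [N [kN N_V]].
exists N; split => // y Dy Ny; apply: N_V => //.
by congr N: Ny; apply: funext => f; rewrite subr0.
Qed.

End EpsProd.
End DualFV.

Theorem proposition4p6 (R : realType) (b : bool)
  (Omega : Type) (d : Omega -> Omega -> R)
  (E : tvsType (Kof R b))
  (J M : Type) (omega : M -> Type)
  (nu : forall m : M, J -> omega m -> Kof R b)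
  (AP : set (Omega -> Kof R b)) (domT : M -> set (Omega -> Kof R b))
  (T : forall m : M, (Omega -> Kof R b) -> (omega m -> Kof R b)) :
  is_metric d ->
  hausdorff_space E ->
  (exists e : E, e <> 0) ->
  inhabited J -> inhabited M -> (forall m, inhabited (omega m)) ->
  (forall m j (x : omega m), 0 <= nu m j x) ->
  (forall m (x : omega m), exists j, 0 < nu m j x) ->
  lin_subspace AP ->
  (forall m, lin_subspace (domT m)) ->
  (forall m, linear_on (domT m) (T m)) ->
  dom_space nu AP domT T ->
  lin_subspace (FV nu AP domT T) ->
  FV nu AP domT T `<=` Cu d ->
  ucont_kappa nu AP domT T d (delta nu AP domT T) ->
  forall u : ((Omega -> Kof R b) -> Kof R b) -> E,
    eps_prod nu AP domT T u ->
    CuE d (fun x => u (delta nu AP domT T x)).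
Proof.
move=> _ _ _ _ _ _ _ _ _ _ _ [_ _ delta_dual] _ _ delta_ucont u u_eps V V0.
have [N [kN N_V]] := eps_prod_cont0 u_eps V0.
have [eta eta_gt0 close_N] := delta_ucont N kN.
exists eta => // x z dxz.
rewrite -(eps_prodB u_eps (delta_dual x) (delta_dual z)).
exact: N_V (FVdualB (delta_dual x) (delta_dual z)) (close_N x z dxz).
Qed.
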